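(* Let $\Bbbk$ be a field, $\lambda=(\lambda_1,\ldots,\lambda_n)$ a partition with $\lambda_1\ge\cdots\ge\lambda_n\ge1$, $m=\lambda_1$, $S=\Bbbk[x_1,\ldots,x_n,y_1,\ldots,y_m]$ and $I_\lambda=(x_iy_j\mid 1\le i\le n,1\le j\le\lambda_i)$. Then $\operatorname{depth}S/I_\lambda^t=1$ for all $t\ge2$. *)

From mathcomp Require Import all_boot all_algebra.
From mathcomp Require Import mpoly.

Set Implicit Arguments.
Unset Strict Implicit.
Unset Printing Implicit Defensive.

Import GRing.Theory.
Local Open Scope ring_scope.

Section Ideals.
Variables (k : fieldType) (N : nat).
Local Notation R := {mpoly k[N]}.

Definition in_ideal (A : R -> Prop) (f : R) : Prop :=
  exists s : seq (R * R),
    (forall p, p \in s -> A p.2) /\ f = \sum_(p <- s) p.1 * p.2.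

Fixpoint pow_ideal (A : R -> Prop) (t : nat) : R -> Prop :=
  match t with
  | 0 => fun _ => True
  | t'.+1 => in_ideal (fun f => exists a b,
               pow_ideal A t' a /\ in_ideal A b /\ f = a * b)
  end.

Definition max_ideal : R -> Prop := in_ideal (fun h => exists i : 'I_N, h = 'X_i).

Definition ideal_add_seq (J : R -> Prop) (fs : seq R) : R -> Prop :=
  in_ideal (fun h => J h \/ h \in fs).

Definition regular_seq (J : R -> Prop) (fs : seq R) : Prop :=
  (forall i, (i < size fs)%N -> forall g : R,
      ideal_add_seq J (take i fs) (fs`_i * g) -> ideal_add_seq J (take i fs) g)
  /\ ~ ideal_add_seq J fs 1.

Definition depth_quot_eq (J : R -> Prop) (d : nat) : Prop :=
  (exists fs : seq R, size fs = d /\ (forall f, f \in fs -> max_ideal f)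
                      /\ regular_seq J fs)
  /\ ~ (exists fs : seq R, (d < size fs)%N /\ (forall f, f \in fs -> max_ideal f)
                      /\ regular_seq J fs).

End Ideals.

(** For a partition [lam] = (lam_1,...,lam_n), the ring
    S = k[x_1..x_n, y_1..y_m] with m = lam_1 is {mpoly k[n + m]},
    x_i = 'X_(lshift m i), y_j = 'X_(rshift n j). *)
Definition xvar (k : fieldType) (lam : seq nat) (i : 'I_(size lam))
  : {mpoly k[size lam + head 0%N lam]} := 'X_(lshift (head 0%N lam) i).
Definition yvar (k : fieldType) (lam : seq nat) (j : 'I_(head 0%N lam))
  : {mpoly k[size lam + head 0%N lam]} := 'X_(rshift (size lam) j).

Definition Ilam_gens (k : fieldType) (lam : seq nat)
  (h : {mpoly k[size lam + head 0%N lam]}) : Prop :=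
  exists (i : 'I_(size lam)) (j : 'I_(head 0%N lam)),
    (j < nth 0%N lam i)%N /\ h = @xvar k lam i * @yvar k lam j.

From mathcomp Require Import all_boot all_algebra.
From mathcomp Require Import mpoly.
From mathcomp Require Import zify ring.

Set Implicit Arguments.
Unset Strict Implicit.
Unset Printing Implicit Defensive.

(* I_lam^t is a monomial ideal, and a monomial lies in it iff for every
   k = 0..n it has degree at least t on the cut x_1..x_k, y_1..y_(lam_(k+1)):
   every generator x_i y_j meets every cut, and conversely a suitable
   generator can always be split off greedily.
   Depth >= 1: x_n - y_m is a nonzerodivisor modulo I_lam^t, because x_n only
   occurs in the last cut and y_m does not occur in it.
   Depth <= 1: put a_(x_i) = 0 and a_(y_j) = y_j (x_1 y_1)^(t-1). Since t >= 2,
   every x_i y_j (x_1 y_1)^(t-1) lies in I_lam^t, so z_u a_v = z_v a_u modulo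
   I_lam^t for all variables z_u, z_v; but no w satisfies a_u = z_u w modulo
   I_lam^t, as neither x_1 (x_1 y_1)^(t-1) nor y_1 (x_1 y_1)^(t-1) lies in
   I_lam^t. A regular sequence of length two in the maximal ideal would provide
   such a w. *)

Import GRing.Theory.
Local Open Scope ring_scope.

Section Ideals.
Variables (K : fieldType) (N : nat).
Local Notation S := {mpoly K[N]}.
Implicit Types (A B : S -> Prop) (p q r : S) (G : pred 'X_{1..N}).

Lemma in_ideal_ind A (P : S -> Prop) :
  P 0 -> (forall p q, P p -> P q -> P (p + q)) -> (forall r a, A a -> P (r * a)) ->
  forall p, in_ideal A p -> P p.
Proof.
move=> P0 PD PM p [s [hs ->]]; rewrite big_seq.
by apply: (big_ind P) => // x /hs; apply: PM.
Qed.

Lemma in_ideal0 A : in_ideal A 0.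
Proof. by exists [::]; rewrite big_nil. Qed.

Lemma in_idealD A p q : in_ideal A p -> in_ideal A q -> in_ideal A (p + q).
Proof.
move=> [s [hs ->]] [s' [hs' ->]]; exists (s ++ s'); split; last by rewrite big_cat.
by move=> x; rewrite mem_cat => /orP [/hs|/hs'].
Qed.

Lemma in_idealMl A r p : in_ideal A p -> in_ideal A (r * p).
Proof.
move=> [s [hs ->]]; exists [seq (r * x.1, x.2) | x <- s]; split.
  by move=> x /mapP [y /hs hy ->].
by rewrite big_map mulr_sumr; apply: eq_bigr => x _; rewrite mulrA.
Qed.

Lemma in_idealN A p : in_ideal A p -> in_ideal A (- p).
Proof. by rewrite -mulN1r; apply: in_idealMl. Qed.

Lemma in_ideal_gen A a : A a -> in_ideal A a.
Proof. by exists [:: (1, a)]; rewrite big_seq1 mul1r; split=> // x /[!inE] /eqP ->. Qed.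

Lemma in_ideal_sum A (I : eqType) (s : seq I) (F : I -> S) :
  (forall i, i \in s -> in_ideal A (F i)) -> in_ideal A (\sum_(i <- s) F i).
Proof.
by move=> hF; rewrite big_seq; apply: big_ind => //; [apply: in_ideal0 | apply: in_idealD].
Qed.

Lemma in_ideal_sub A B p : (forall a, A a -> in_ideal B a) -> in_ideal A p -> in_ideal B p.
Proof.
move=> hAB; apply: in_ideal_ind => [|p1 p2|r a /hAB]; [exact: in_ideal0|exact: in_idealD|].
exact: in_idealMl.
Qed.

Lemma max_ideal_lincomb f : max_ideal f -> exists c : 'I_N -> S, f = \sum_(v < N) c v * 'X_v.
Proof.
elim/in_ideal_ind => [|p q [c ->] [d ->]|r a [i ->]].
- by exists (fun=> 0); rewrite big1 // => v _; rewrite mul0r.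
- by exists (fun v => c v + d v); rewrite -big_split; apply: eq_bigr => v _; rewrite mulrDl.
- exists (fun v => if v == i then r else 0); rewrite (bigD1 i) //= eqxx big1 ?addr0 //.
  by move=> v /negbTE ->; rewrite mul0r.
Qed.

Lemma max_ideal_XB (u v : 'I_N) : max_ideal ('X_u - 'X_v : S).
Proof. by apply: in_idealD; [|apply: in_idealN]; apply: in_ideal_gen; eexists. Qed.

Definition supp_in G p := forall m, m \in msupp p -> G m.

Definition upward_closed G := forall m m', G m -> G (m + m')%MM.

Lemma supp_inN G p : supp_in G p -> supp_in G (- p).
Proof. by move=> h m; rewrite (perm_mem (msuppN p)); apply: h. Qed.

Lemma supp_inM (G1 G2 G3 : pred 'X_{1..N}) p q :
  (forall m1 m2, G1 m1 -> G2 m2 -> G3 (m1 + m2)%MM) ->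
  supp_in G1 p -> supp_in G2 q -> supp_in G3 (p * q).
Proof.
move=> h hp hq m /msuppM_le /allpairsP [[m1 m2] /= [h1 h2 ->]].
by apply: h; [apply: hp | apply: hq].
Qed.

Lemma supp_in_ideal G A p : upward_closed G ->
  (forall a, A a -> supp_in G a) -> in_ideal A p -> supp_in G p.
Proof.
move=> hG hA; apply: in_ideal_ind => [m|p1 p2 h1 h2 m|r a /hA ha].
- by rewrite msupp0.
- by move=> /msuppD_le; rewrite mem_cat => /orP [/h1|/h2].
- apply: (supp_inM (G1 := predT)) ha => // m1 m2 _; rewrite addmC; exact: hG.
Qed.

Lemma one_notin_ideal A :
  (forall a, A a -> supp_in (fun m => m != 0%MM) a) -> ~ in_ideal A 1.
Proof.
have hup : upward_closed (fun m : 'X_{1..N} => m != 0%MM).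
  by move=> m m' hm; rewrite mnmD_eq0 negb_and hm.
move=> hA /(supp_in_ideal hup hA) /(_ 0%MM).
by rewrite msupp1 mem_head eqxx => /(_ isT).
Qed.

Lemma ideal_add_nil A h : ideal_add_seq (in_ideal A) [::] h <-> in_ideal A h.
Proof.
split=> [|hh]; last by apply: in_ideal_gen; left.
by apply: in_ideal_sub => a [//|]; rewrite in_nil.
Qed.

Lemma ideal_add_seq1 A f h :
  ideal_add_seq (in_ideal A) [:: f] h <-> exists r j, in_ideal A j /\ h = f * r + j.
Proof.
split=> [|[r [j [hj ->]]]]; last first.
  apply: in_idealD; last by apply: in_ideal_gen; left.
  by rewrite mulrC; apply: in_idealMl; apply: in_ideal_gen; right; rewrite mem_head.
elim/in_ideal_ind => [|p q [r1 [j1 [h1 ->]]] [r2 [j2 [h2 ->]]]|r a [ha|]].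
- by exists 0, 0; split; [apply: in_ideal0 | rewrite mulr0 addr0].
- by exists (r1 + r2), (j1 + j2); split; [apply: in_idealD | ring].
- by exists 0, (r * a); split; [apply: in_idealMl | rewrite mulr0 add0r].
- by rewrite inE => /eqP ->; exists r, 0; split; [apply: in_ideal0 | rewrite addr0 mulrC].
Qed.

Lemma regular_seq_head_nzd A f fs g :
  regular_seq (in_ideal A) (f :: fs) -> in_ideal A (f * g) -> in_ideal A g.
Proof. by move=> [hreg _] /ideal_add_nil /(hreg 0%N isT) /ideal_add_nil. Qed.

Lemma regular_seq_second_nzd A f1 f2 fs g r :
  regular_seq (in_ideal A) [:: f1, f2 & fs] -> in_ideal A (f2 * g - f1 * r) ->
  exists w, in_ideal A (g - f1 * w).
Proof.
move=> [hreg _] h; have /(hreg 1%N isT) /ideal_add_seq1 [w [j [hj ->]]] :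
  ideal_add_seq (in_ideal A) [:: f1] (f2 * g).
  by apply/ideal_add_seq1; exists r, (f2 * g - f1 * r); split=> //; ring.
by exists w; rewrite addrC addKr.
Qed.

(* Write f_1 = sum c_v X_v, f_2 = sum d_v X_v and F e = sum e_v a_v. The
   cocycle condition gives f_2 (F c) = f_1 (F d) modulo J; as f_2 is regular
   modulo (J, f_1), F c = f_1 w modulo J. Then
   f_1 (a_u - X_u w) = X_u (F c - f_1 w) = 0 modulo J, and f_1 is regular. *)
Lemma regular_pair_cocycle A f1 f2 fs (a : 'I_N -> S) :
  max_ideal f1 -> max_ideal f2 -> regular_seq (in_ideal A) [:: f1, f2 & fs] ->
  (forall v v', in_ideal A ('X_v' * a v - 'X_v * a v')) ->
  exists w, forall u, in_ideal A (a u - 'X_u * w).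
Proof.
move=> /max_ideal_lincomb [c ->] /max_ideal_lincomb [d ->] hreg ha.
pose F (e : 'I_N -> S) := \sum_(v < N) e v * a v.
have [w hw] : exists w, in_ideal A (F c - (\sum_(v < N) c v * 'X_v) * w).
  apply: (regular_seq_second_nzd (r := F d) hreg).
  have -> : (\sum_(v < N) d v * 'X_v) * F c - (\sum_(v < N) c v * 'X_v) * F d =
      \sum_(v < N) \sum_(v' < N) (d v * c v') * ('X_v * a v' - 'X_v' * a v).
    apply/eqP; rewrite subr_eq; apply/eqP; rewrite /F !mulr_suml.
    under eq_bigr do rewrite mulr_sumr.
    under [X in _ = _ + X]eq_bigr do rewrite mulr_sumr.
    rewrite [X in _ = _ + X]exchange_big /= -big_split /=.
    apply: eq_bigr => v _; rewrite -big_split /=; apply: eq_bigr => v' _; ring.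
  by apply: in_ideal_sum => v _; apply: in_ideal_sum => v' _; apply: in_idealMl.
exists w => u; apply: (regular_seq_head_nzd hreg).
have hcoc : in_ideal A (\sum_(v < N) c v * ('X_v * a u - 'X_u * a v)).
  by apply: in_ideal_sum => v _; apply: in_idealMl.
have -> : (\sum_(v < N) c v * 'X_v) * (a u - 'X_u * w) =
    \sum_(v < N) c v * ('X_v * a u - 'X_u * a v) +
    'X_u * (F c - (\sum_(v < N) c v * 'X_v) * w).
  have -> : \sum_(v < N) c v * ('X_v * a u - 'X_u * a v) =
      (\sum_(v < N) c v * 'X_v) * a u - 'X_u * F c.
    by rewrite /F mulr_suml mulr_sumr -sumrB; apply: eq_bigr => v _; ring.
  ring.
by apply: in_idealD hcoc _; apply: in_idealMl.
Qed.

End Ideals.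

Lemma seq_argmax (T : eqType) (s : seq T) (f : T -> nat) x0 :
  x0 \in s -> exists2 x, x \in s & forall y, y \in s -> (f y <= f x)%N.
Proof.
move=> hx0; have exP : exists p, has (fun x => f x == p) s.
  by exists (f x0); apply/hasP; exists x0.
have bnd p : has (fun x => f x == p) s -> (p <= \max_(x <- s) f x)%N.
  by move=> /hasP [x hx /eqP <-]; apply: leq_bigmax_seq.
case: (ex_maxnP exP bnd) => p /hasP [x hx /eqP <-] hmax.
by exists x => // y hy; apply: hmax; apply/hasP; exists y.
Qed.

Section BinomialNonzerodivisor.
Variables (K : fieldType) (N : nat).
Local Notation S := {mpoly K[N]}.
Variables (G : pred 'X_{1..N}) (g : S).
Hypothesis G_up : upward_closed G.

Lemma mcoeff_XM (v : 'I_N) (p : S) (m : 'X_{1..N}) : ('X_v * p)@_(U_(v) + m)%MM = p@_m.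
Proof. by rewrite mulrC mcoeffMX. Qed.

Lemma mcoeff_XM_eq0 (v : 'I_N) (p : S) (m : 'X_{1..N}) : m v = 0%N -> ('X_v * p)@_m = 0.
Proof.
move=> hm; apply/eqP; rewrite mcoeff_eq0 mulrC (perm_mem (msuppMX _ _)).
by apply/mapP=> -[m' _ hE]; move: hm; rewrite hE mnmDE mnm1E eqxx.
Qed.

(* The coefficient of nu + e_P in (x_P - x_Q) g is g_nu - g_nu', where
   nu' + e_Q = nu + e_P; it can only vanish if nu' is in the support of g. *)
Lemma supp_in_shift (P Q : 'I_N) nu :
  supp_in G (('X_P - 'X_Q) * g) -> nu \in msupp g ->
  (forall nu', nu' \in msupp g -> (nu' + U_(Q) = nu + U_(P))%MM -> G nu') ->
  G (nu + U_(P))%MM.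
Proof.
move=> hfg hnu hpre.
have hcoef : (('X_P - 'X_Q) * g)@_(nu + U_(P)) = g@_nu - ('X_Q * g)@_(nu + U_(P)).
  by rewrite mulrBl mcoeffB addmC mcoeff_XM.
have [hQ0|hQ] := eqVneq (('X_Q * g)@_(nu + U_(P))%MM) 0.
  by apply: hfg; rewrite mcoeff_msupp hcoef hQ0 subr0 -mcoeff_msupp.
have hle : (U_(Q) <= nu + U_(P))%MM.
  by rewrite lep1mP; apply: contra hQ => /eqP /mcoeff_XM_eq0 ->.
have hnu' : (nu + U_(P) - U_(Q) + U_(Q) = nu + U_(P))%MM by rewrite submK.
rewrite -hnu'; apply: G_up; apply: (hpre _ _ hnu').
by rewrite mcoeff_msupp -(mcoeff_XM Q) addmC hnu'.
Qed.

Lemma extremal_shift_good (P Q : 'I_N) nu :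
  P != Q -> supp_in G (('X_P - 'X_Q) * g) -> nu \in msupp g ->
  (forall nu', nu' \in msupp g -> ~~ G nu' ->
     (forall v, v != P -> v != Q -> nu' v = nu v) -> (nu' P <= nu P)%N) ->
  G (nu + U_(P))%MM.
Proof.
move=> hPQ hfg hnu hmax; apply: (supp_in_shift hfg hnu) => nu' hnu' hsum.
have hsumE v : (nu' v + (Q == v) = nu v + (P == v))%N.
  by have := congr1 (fun m : 'X_{1..N} => m v) hsum; rewrite !mnmDE !mnm1E.
have hoff v : v != P -> v != Q -> nu' v = nu v.
  by move=> hvP hvQ; have := hsumE v; rewrite ![_ == v]eq_sym (negbTE hvP) (negbTE hvQ) !addn0.
apply/negPn/negP => hbad; have := hmax nu' hnu' hbad hoff.
by have := hsumE P; rewrite eqxx eq_sym (negbTE hPQ); lia.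
Qed.

(* Among the monomials of g outside G that agree with a given one off {P, Q},
   take n1 with the largest P-exponent and n2 with the largest Q-exponent:
   n1 + e_P and n2 + e_Q lie in G, and the exchange hypothesis puts n1 in G. *)
Lemma binomial_nzd (P Q : 'I_N) :
  P != Q ->
  (forall mu nu : 'X_{1..N}, (forall v, v != Q -> (nu v <= mu v)%N) ->
     G (mu + U_(P))%MM -> G (nu + U_(Q))%MM -> G mu) ->
  supp_in G (('X_P - 'X_Q) * g) -> supp_in G g.
Proof.
move=> hPQ hexch hfg mu hmu; apply/negPn/negP => hbad.
pose agrees (nu : 'X_{1..N}) := [forall v, (v != P) && (v != Q) ==> (nu v == mu v)].
pose cls := [seq nu <- msupp g | ~~ G nu && agrees nu].
have clsP nu : nu \in cls <->
    [/\ nu \in msupp g, ~~ G nu & forall v, v != P -> v != Q -> nu v = mu v].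
  rewrite mem_filter /agrees; split.
    case/andP => /andP [hb /forallP ha] hin; split=> // v hvP hvQ.
    by apply/eqP; have := ha v; rewrite hvP hvQ.
  case=> hin hb ha; rewrite hin hb andbT /=.
  by apply/forallP => v; apply/implyP => /andP [hvP hvQ]; rewrite ha.
have mu_cls : mu \in cls by apply/clsP.
have [n1 /clsP [n1g n1bad n1mu] n1max] := seq_argmax (fun nu : 'X_{1..N} => nu P) mu_cls.
have [n2 /clsP [n2g n2bad n2mu] n2max] := seq_argmax (fun nu : 'X_{1..N} => nu Q) mu_cls.
have n1P : G (n1 + U_(P))%MM.
  apply: (extremal_shift_good hPQ hfg n1g) => nu' hin hb hoff; apply: n1max; apply/clsP.
  by split=> // v hvP hvQ; rewrite hoff // n1mu.
have n2Q : G (n2 + U_(Q))%MM.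
  have hfg' : supp_in G (('X_Q - 'X_P) * g) by rewrite -opprB mulNr; apply: supp_inN.
  apply: (extremal_shift_good _ hfg' n2g); first by rewrite eq_sym.
  move=> nu' hin hb hoff; apply: n2max; apply/clsP.
  by split=> // v hvP hvQ; rewrite hoff // n2mu.
move/negP: n1bad; apply; apply: (hexch n1 n2) => // v hvQ.
have [->|hvP] := eqVneq v P; first by apply: n1max; apply/clsP.
by rewrite n1mu // n2mu.
Qed.

End BinomialNonzerodivisor.

Section EdgeRemoval.
Local Open Scope nat_scope.
Variables (al be lf : nat -> nat) (n t : nat).
Hypothesis lf_anti : {homo lf : a b / a <= b >-> a >= b}.
Hypothesis lf_n : lf n = 0.
Hypothesis bound : forall k, k <= n ->
  t < \sum_(0 <= i < k) al i + \sum_(0 <= j < lf k) be j.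

Lemma exists_x_with_y : exists2 i, i < n & (0 < al i) && (0 < \sum_(0 <= j < lf i) be j).
Proof.
have exk : exists k, \sum_(0 <= j < lf k) be j == 0 by exists n; rewrite lf_n big_geq.
case: (ex_minnP exk) => k0 /eqP hk0 hmin.
have k0n : k0 <= n by apply: hmin; rewrite lf_n big_geq.
have := bound k0n; rewrite hk0 addn0 => /(leq_ltn_trans (leq0n t)).
rewrite lt0n sum_nat_seq_neq0 => /hasP [i /[!mem_index_iota] /andP [_ hik] /= hi].
exists i; first exact: leq_trans hik k0n.
by rewrite lt0n hi /= lt0n; apply: contraL hik => /hmin; rewrite -leqNgt.
Qed.

(* In a cut containing both x_i and y_j, maximality of j makes the y-part equal
   to that of cut i, while the x-part has gained al i > 0 over it. *)
Lemma edge_bound i j : i < n -> j < lf i -> 0 < al i ->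
  (forall j', j < j' < lf i -> be j' = 0) ->
  forall k, k <= n -> t + ((i < k) + (j < lf k)) <=
    \sum_(0 <= i' < k) al i' + \sum_(0 <= j' < lf k) be j'.
Proof.
move=> hin hj hai hzero k hk; have hLk := bound hk.
case: (ltnP i k) => hik; last by rewrite add0n; case: (j < lf k); lia.
case: (ltnP j (lf k)) => hjk; last by rewrite addn0; lia.
have hlk : lf k <= lf i by apply: lf_anti; apply: ltnW.
have eqB : \sum_(0 <= j' < lf i) be j' = \sum_(0 <= j' < lf k) be j'.
  have hz : \sum_(lf k <= j' < lf i) be j' = 0.
    by rewrite big_nat big1 // => j' /andP [h1 h2]; apply: hzero; rewrite h2 (leq_trans hjk h1).
  by rewrite (big_cat_nat (leq0n (lf k)) hlk) hz /= addn0.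
have hAk : \sum_(0 <= i' < i.+1) al i' <= \sum_(0 <= i' < k) al i'.
  by rewrite (big_cat_nat (leq0n i.+1) hik) leq_addr.
have := bound (ltnW hin); rewrite big_nat_recr //= in hAk; rewrite eqB; lia.
Qed.

Lemma exists_removable_edge : exists i j, [/\ i < n, j < lf i, 0 < al i, 0 < be j &
  forall k, k <= n -> t + ((i < k) + (j < lf k)) <=
    \sum_(0 <= i' < k) al i' + \sum_(0 <= j' < lf k) be j'].
Proof.
have [i hin /andP [hai hBi]] := exists_x_with_y.
have exj : exists j, (j < lf i) && (0 < be j).
  move: hBi; rewrite lt0n sum_nat_seq_neq0 => /hasP [j /[!mem_index_iota] /andP [_ hj] /= hb].
  by exists j; rewrite hj lt0n.
have bndj j : (j < lf i) && (0 < be j) -> j <= lf i by move=> /andP [/ltnW].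
case: (ex_maxnP exj bndj) => j /andP [hj hbj] hmax.
exists i, j; split=> //; apply: edge_bound => // j' /andP [h1 h2].
by apply/eqP; rewrite -leqn0 leqNgt; apply/negP => hb; have := hmax j'; rewrite h2 hb; lia.
Qed.

End EdgeRemoval.

Section FerrersCuts.
Variable lam : seq nat.
Local Notation n := (size lam).
Local Notation m := (head 0%N lam).
Local Notation M := 'X_{1..n + m}.
Local Open Scope nat_scope.
Implicit Types (mu nu : M) (t : nat).

Definition xdeg mu i := oapp (fun i' : 'I_n => mu (lshift m i')) 0 (insub i).
Definition ydeg mu j := oapp (fun j' : 'I_m => mu (rshift n j')) 0 (insub j).

(* Degree of mu on the k-th cut x_1, ..., x_k, y_1, ..., y_(lam_(k+1)); here
   nth 0 lam k = lam_(k+1), which is 0 for k = n. *)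
Definition cut_deg mu k :=
  \sum_(0 <= i < k) xdeg mu i + \sum_(0 <= j < nth 0 lam k) ydeg mu j.

Definition ferrers_bound t : pred M := fun mu => [forall k : 'I_n.+1, t <= cut_deg mu k].

Lemma xdeg_lshift mu (i : 'I_n) : xdeg mu i = mu (lshift m i).
Proof. by rewrite /xdeg valK. Qed.

Lemma ydeg_rshift mu (j : 'I_m) : ydeg mu j = mu (rshift n j).
Proof. by rewrite /ydeg valK. Qed.

Lemma cut_degD mu nu k : cut_deg (mu + nu)%MM k = cut_deg mu k + cut_deg nu k.
Proof.
have xD i : xdeg (mu + nu)%MM i = xdeg mu i + xdeg nu i.
  by rewrite /xdeg; case: insubP => [i' _ _|_] /=; rewrite ?mnmDE.
have yD j : ydeg (mu + nu)%MM j = ydeg mu j + ydeg nu j.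
  by rewrite /ydeg; case: insubP => [j' _ _|_] /=; rewrite ?mnmDE.
rewrite /cut_deg; under eq_bigr do rewrite xD; under [X in _ + X]eq_bigr do rewrite yD.
rewrite !big_split /=; lia.
Qed.

Lemma cut_deg0 k : cut_deg 0%MM k = 0.
Proof.
by rewrite /cut_deg !big1 // => i _; rewrite /xdeg /ydeg; case: insubP => //= *; rewrite mnm0E.
Qed.

Lemma cut_degMn mu r k : cut_deg (mu *+ r)%MM k = cut_deg mu k * r.
Proof. by elim: r => [|r IH]; rewrite ?mulm0n ?cut_deg0 ?muln0 // mulmS cut_degD IH mulnS. Qed.

Lemma sum_nat_indicator i0 k : \sum_(0 <= i < k) (i == i0) = (i0 < k).
Proof.
elim: k => [|k IH]; first by rewrite big_geq.
by rewrite big_nat_recr //= IH ltnS; case: ltngtP.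
Qed.

Lemma cut_deg_x (i0 : 'I_n) k : cut_deg U_(lshift m i0)%MM k = (i0 < k).
Proof.
rewrite /cut_deg big_nat [X in _ + X]big1 => [|j _]; last first.
  by rewrite /ydeg; case: insubP => [j' _ _|] //=; rewrite mnm1E eq_lrshift.
rewrite addn0 -big_nat -sum_nat_indicator; apply: eq_bigr => i _.
rewrite /xdeg; case: insubP => [i' _ hi|] /=; last by case: eqP => // -> /[!ltn_ord].
by rewrite mnm1E (inj_eq (@lshift_inj _ _)) eq_sym -val_eqE /= hi.
Qed.

Lemma cut_deg_y (j0 : 'I_m) k : cut_deg U_(rshift n j0)%MM k = (j0 < nth 0 lam k).
Proof.
rewrite /cut_deg big_nat big1 => [|i _]; last first.
  by rewrite /xdeg; case: insubP => [i' _ _|] //=; rewrite mnm1E eq_rlshift.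
rewrite add0n -sum_nat_indicator; apply: eq_bigr => j _.
rewrite /ydeg; case: insubP => [j' _ hj|] /=; last by case: eqP => // -> /[!ltn_ord].
by rewrite mnm1E (inj_eq (@rshift_inj _ _)) eq_sym -val_eqE /= hj.
Qed.

Lemma ferrers_boundP t mu : reflect (forall k, k <= n -> t <= cut_deg mu k) (ferrers_bound t mu).
Proof.
apply: (iffP forallP) => [h k hk|h k]; last by apply: h; rewrite -ltnS ltn_ord.
exact: (h (Ordinal (hk : k < n.+1))).
Qed.

Lemma ferrers_bound_up t : upward_closed (ferrers_bound t).
Proof.
move=> mu nu /ferrers_boundP h; apply/ferrers_boundP => k hk.
by rewrite cut_degD; apply: leq_trans (h k hk) (leq_addr _ _).
Qed.

Lemma ferrers_boundD t1 t2 mu nu :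
  ferrers_bound t1 mu -> ferrers_bound t2 nu -> ferrers_bound (t1 + t2) (mu + nu)%MM.
Proof.
move=> /ferrers_boundP h1 /ferrers_boundP h2; apply/ferrers_boundP => k hk.
by rewrite cut_degD leq_add ?h1 ?h2.
Qed.

End FerrersCuts.

Section FerrersPowers.
Variables (K : fieldType) (lam : seq nat).
Local Notation n := (size lam).
Local Notation m := (head 0%N lam).
Local Notation S := {mpoly K[n + m]}.
Local Notation Ilam := (@Ilam_gens K lam).
Hypothesis lam_sorted : sorted geq lam.

Lemma nth_lam_anti : {homo nth 0%N lam : a b / (a <= b)%N >-> (a >= b)%N}.
Proof.
move=> a b hab; case: (ltnP b n) => hb; last by rewrite nth_default.
have geq_trans : transitive geq by move=> x y z /= h1 h2; apply: leq_trans h2 h1.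
by apply: (sorted_leq_nth geq_trans leqnn 0 lam_sorted); rewrite ?inE //= ?(leq_ltn_trans hab hb).
Qed.

Lemma ferrers_bound_edge (i : 'I_n) (j : 'I_m) :
  (j < nth 0 lam i)%N -> ferrers_bound 1 (U_(lshift m i) + U_(rshift n j))%MM.
Proof.
move=> hj; apply/ferrers_boundP => k hk; rewrite cut_degD cut_deg_x cut_deg_y.
case: (ltnP i k) => // hik; rewrite add0n lt0b.
exact: leq_trans hj (nth_lam_anti hik).
Qed.

Lemma Ilam_gens_monomial (i : 'I_n) (j : 'I_m) :
  @xvar K lam i * @yvar K lam j = 'X_[U_(lshift m i) + U_(rshift n j)].
Proof. by rewrite mpolyXD. Qed.

Lemma pow_ferrers_supp t (p : S) : pow_ideal Ilam t p -> supp_in (ferrers_bound t) p.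
Proof.
elim: t p => [|t IH] p /=; first by move=> _ mu _; apply/ferrers_boundP.
apply: supp_in_ideal; first exact: ferrers_bound_up.
move=> _ [a [b [ha [hb ->]]]].
apply: (supp_inM (G1 := ferrers_bound t) (G2 := ferrers_bound 1)); last 2 first.
- exact: IH.
- apply: (supp_in_ideal _ _ hb); first exact: ferrers_bound_up.
  move=> _ [i [j [hij ->]]]; rewrite Ilam_gens_monomial => mu; rewrite msuppX inE => /eqP ->.
  exact: ferrers_bound_edge.
by move=> mu nu h1 h2; rewrite -addn1; apply: ferrers_boundD.
Qed.

Lemma ferrers_monomial_in_pow t (mu : 'X_{1..n + m}) :
  ferrers_bound t mu -> pow_ideal Ilam t 'X_[mu].
Proof.
elim: t mu => [|t IH] mu //= /ferrers_boundP hmu.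
have [i [j [hi hj hxi hyj hcut]]] :=
  exists_removable_edge (nth_lam_anti) (nth_default 0 (leqnn n)) hmu.
have hjm : (j < m)%N by rewrite (leq_trans hj) // -nth0 nth_lam_anti.
pose e := (U_(lshift m (Ordinal hi)) + U_(rshift n (Ordinal hjm)))%MM.
have hle : (e <= mu)%MM.
  apply/mnm_lepP => v; rewrite mnmDE !mnm1E.
  have [<-|hx] := eqVneq (lshift m (Ordinal hi)) v.
    by rewrite eq_rlshift addn0; move: hxi; rewrite -[i]/(val (Ordinal hi)) xdeg_lshift.
  have [<-|//] := eqVneq (rshift n (Ordinal hjm)) v.
  by move: hyj; rewrite -[j]/(val (Ordinal hjm)) ydeg_rshift.
have hrest : ferrers_bound t (mu - e)%MM.
  apply/ferrers_boundP => k' hk'; have := hcut k' hk'.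
  rewrite -/(cut_deg mu k').
  have -> : cut_deg mu k' = (cut_deg (mu - e)%MM k' + cut_deg e k')%N by rewrite -cut_degD submK.
  by rewrite /e cut_degD cut_deg_x cut_deg_y /=; lia.
rewrite -(submK hle) mpolyXD; apply: in_ideal_gen.
exists 'X_[mu - e], 'X_[e]; split; first exact: IH.
split=> //; apply: in_ideal_gen; exists (Ordinal hi), (Ordinal hjm).
by rewrite Ilam_gens_monomial.
Qed.

Lemma mem_pow_ferrers t (p : S) : pow_ideal Ilam t p <-> supp_in (ferrers_bound t) p.
Proof.
split; first exact: pow_ferrers_supp.
case: t => [//|t] hp; rewrite (mpolyE p); apply: in_ideal_sum => mu hmu.
by rewrite -mul_mpolyC; apply: in_idealMl; apply: (ferrers_monomial_in_pow (hp mu hmu)).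
Qed.

End FerrersPowers.

Section FerrersDepth.
Variables (K : fieldType) (lam : seq nat).
Local Notation n := (size lam).
Local Notation m := (head 0%N lam).
Local Notation S := {mpoly K[n + m]}.
Local Notation Ilam := (@Ilam_gens K lam).
Hypothesis lam_sorted : sorted geq lam.
Hypothesis lam_pos : all (fun a => 0 < a)%N lam.
Hypothesis lam_nonempty : (0 < n)%N.

Lemma nth_lam_gt0 k : (k < n)%N -> (0 < nth 0 lam k)%N.
Proof. exact: (all_nthP 0 lam_pos). Qed.

Lemma head_lam_gt0 : (0 < m)%N.
Proof. by rewrite -nth0 nth_lam_gt0. Qed.

Fact size_pred_lt : (n.-1 < n)%N. Proof. by rewrite ltn_predL. Qed.
Fact head_pred_lt : (m.-1 < m)%N. Proof. by rewrite ltn_predL head_lam_gt0. Qed.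

Definition Xfirst : 'I_(n + m) := lshift m (Ordinal lam_nonempty).
Definition Yfirst : 'I_(n + m) := rshift n (Ordinal head_lam_gt0).
Definition Xlast : 'I_(n + m) := lshift m (Ordinal size_pred_lt).
Definition Ylast : 'I_(n + m) := rshift n (Ordinal head_pred_lt).

Lemma ferrers_bound_exchange t (mu nu : 'X_{1..n + m}) :
  (forall v, v != Ylast -> (nu v <= mu v)%N) ->
  ferrers_bound t (mu + U_(Xlast))%MM -> ferrers_bound t (nu + U_(Ylast))%MM ->
  ferrers_bound t mu.
Proof.
move=> hle /ferrers_boundP hX /ferrers_boundP hY; apply/ferrers_boundP => k hk.
have [hkn|] := ltnP k n.
  have hnk : (n.-1 < k)%N = false by apply/negbTE; rewrite -leqNgt -ltnS prednK.
  by have := hX k hk; rewrite cut_degD cut_deg_x /= hnk addn0.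
rewrite leq_eqVlt ltnNge hk orbF => /eqP <-.
apply: leq_trans (hY n (leqnn n)) _; rewrite cut_degD cut_deg_y nth_default // addn0.
rewrite /cut_deg nth_default // !(big_geq (leqnn 0)) !addn0; apply: leq_sum => i _.
by rewrite /xdeg; case: insubP => [i' _ _|] //=; rewrite hle // eq_lrshift.
Qed.

Lemma binomial_last_nzd t (g : S) :
  pow_ideal Ilam t (('X_Xlast - 'X_Ylast) * g) -> pow_ideal Ilam t g.
Proof.
rewrite !mem_pow_ferrers //; apply: binomial_nzd; first exact: ferrers_bound_up.
  by rewrite eq_lrshift.
exact: ferrers_bound_exchange.
Qed.

Lemma pow_ideal_nonconstant t (p : S) :
  pow_ideal Ilam t.+1 p -> supp_in (fun mu => mu != 0%MM) p.
Proof.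
move=> /(mem_pow_ferrers lam_sorted) hp mu /hp /ferrers_boundP /(_ 0%N (leq0n n)).
by apply: contraTneq => ->; rewrite cut_deg0.
Qed.

Lemma regular_binomial_last t : regular_seq (pow_ideal Ilam t.+1) [:: 'X_Xlast - 'X_Ylast].
Proof.
split=> [i|].
  rewrite ltnS leqn0 => /eqP -> g /= /ideal_add_nil hg; apply/ideal_add_nil.
  exact: (binomial_last_nzd (t := t.+1) hg).
apply: one_notin_ideal => _ [/pow_ideal_nonconstant //|/[!inE] /eqP ->] mu.
by move=> /msuppB_le; rewrite mem_cat !msuppX !inE => /orP [] /eqP ->; rewrite mnm1_eq0.
Qed.

Variable t : nat.
Hypothesis t_gt0 : (0 < t)%N.
Local Notation J := (pow_ideal Ilam t.+1).

Definition corner : 'X_{1..n + m} := ((U_(Xfirst) + U_(Yfirst)) *+ t)%MM.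

Lemma cut_deg_corner k : cut_deg corner k = (((0 < k) + (0 < nth 0 lam k)) * t)%N.
Proof. by rewrite cut_degMn cut_degD cut_deg_x cut_deg_y. Qed.

Lemma xy_corner_in_pow (i : 'I_n) (j : 'I_m) :
  J ('X_(lshift m i) * ('X_(rshift n j) * 'X_[corner])).
Proof.
rewrite -!mpolyXD; apply/(mem_pow_ferrers lam_sorted) => mu; rewrite msuppX inE => /eqP ->.
apply/ferrers_boundP => k hk; rewrite !cut_degD cut_deg_x cut_deg_y cut_deg_corner.
case: k hk => [|k] hk; first by rewrite nth0 ltn_ord head_lam_gt0 /=; lia.
have [hkn|hkn] := ltnP k.+1 n.
  by have := nth_lam_gt0 hkn; case: (nth 0 lam k.+1) => // l _ /=; lia.
by rewrite (leq_trans (ltn_ord i) hkn); lia.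
Qed.

Definition ycocycle (v : 'I_(n + m)) : S :=
  if split v is inr _ then 'X_v * 'X_[corner] else 0.

Lemma ycocycle_x (i : 'I_n) : ycocycle (lshift m i) = 0.
Proof. by rewrite /ycocycle (unsplitK (inl i)). Qed.

Lemma ycocycle_y (j : 'I_m) : ycocycle (rshift n j) = 'X_(rshift n j) * 'X_[corner].
Proof. by rewrite /ycocycle (unsplitK (inr j)). Qed.

Lemma ycocycle_cocycle v v' : J ('X_v' * ycocycle v - 'X_v * ycocycle v').
Proof.
rewrite /ycocycle -(splitK v) -(splitK v') !unsplitK.
case: (split v) => [i|j]; case: (split v') => [i'|j'] /=.
- by rewrite !mulr0 subr0; apply: in_ideal0.
- by rewrite mulr0 sub0r; apply: in_idealN; apply: xy_corner_in_pow.
- by rewrite mulr0 subr0; apply: xy_corner_in_pow.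
- by rewrite mulrCA subrr; apply: in_ideal0.
Qed.

Lemma ycocycle_not_coboundary w : ~ (forall u, J (ycocycle u - 'X_u * w)).
Proof.
move=> hw.
have /(mem_pow_ferrers lam_sorted) hx : J ('X_Xfirst * w).
  by rewrite -[_ * w]opprK; apply: in_idealN; have := hw Xfirst; rewrite ycocycle_x sub0r.
have [hc|hc] := eqVneq (w@_corner) 0.
  have /(mem_pow_ferrers lam_sorted) hy := hw Yfirst; rewrite ycocycle_y in hy.
  have : (U_(Yfirst) + corner)%MM \in msupp ('X_Yfirst * 'X_[corner] - 'X_Yfirst * w).
    by rewrite mcoeff_msupp mcoeffB !mcoeff_XM hc mcoeffX eqxx subr0 oner_neq0.
  move=> /hy /ferrers_boundP /(_ n (leqnn n)).
  by rewrite cut_degD cut_deg_y cut_deg_corner nth_default //= lam_nonempty; lia.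
have : (U_(Xfirst) + corner)%MM \in msupp ('X_Xfirst * w) by rewrite mcoeff_msupp mcoeff_XM.
move=> /hx /ferrers_boundP /(_ 0%N (leq0n n)).
by rewrite cut_degD cut_deg_x cut_deg_corner nth0 head_lam_gt0 /=; lia.
Qed.

Lemma no_regular_pair f1 f2 fs :
  max_ideal f1 -> max_ideal f2 -> ~ regular_seq J [:: f1, f2 & fs].
Proof.
move=> h1 h2 hreg.
have [w hw] := regular_pair_cocycle h1 h2 hreg ycocycle_cocycle.
exact: ycocycle_not_coboundary hw.
Qed.

End FerrersDepth.

Theorem proposition2p18 (k : fieldType) (lam : seq nat)
  (hn : (0 < size lam)%N)
  (hpart : sorted geq lam)
  (hpos : all (fun a => 0 < a)%N lam)
  (t : nat) (ht : (2 <= t)%N) :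
  depth_quot_eq (pow_ideal (@Ilam_gens k lam) t) 1.
Proof.
case: t ht => [|t] // ht.
split.
  exists [:: 'X_(Xlast hn) - 'X_(Ylast hpos hn)]; split=> //; split.
    by move=> f /[!inE] /eqP ->; apply: max_ideal_XB.
  exact: regular_binomial_last.
case=> -[|f1 [|f2 fs]] [] // _ [hmax hreg].
by apply: (no_regular_pair hpart hpos hn ht (hmax f1 _) (hmax f2 _) hreg); rewrite !inE eqxx ?orbT.
Qed.
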